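(* Let $B\subset\mathbf{P}^4$ be a rational normal quartic, $V=\mathrm{Sec}\,B$, $\mathbf{P}^2=\mathrm{Hilb}_2(B)$, $V_z$ the line spanned by the degree-$2$ divisor $b_z$ of $z\in\mathbf{P}^2$, $G(1,4)\subset\mathbf{P}^9$ the Plücker embedded Grassmannian of lines of $\mathbf{P}^4$, and $Z\subset G(1,4)$ the image of $z\mapsto[V_z]$. Let $A\subset Z$ be the sextic curve corresponding to a general conic of $\mathbf{P}^2$, let $R'\subset\mathbf{P}^4$ be the union of the lines parametrized by $A$, and let $Q$ be the quadric through $B$ with $R'=V\cap Q$ (for general $A$, $Q$ is smooth). Let $W\subset G(1,4)$ be the tangential quadratic complex of $Q$, i.e. the variety of lines tangent to $Q$, and let $T=\langle A\rangle\cap G(1,4)$. Then $W$ does not contain $T$. *)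

(* Projective geometry over an algebraically closed field F
   of characteristic 0.  Points of P^n are represented by nonzero vectors of
   F^(n+1) (row vectors); projective subsets by the cones over them. *)
From HB Require Import structures.
From mathcomp Require Import all_boot all_order all_algebra.
From mathcomp Require Import mpoly.
Set Implicit Arguments. Unset Strict Implicit. Unset Printing Implicit Defensive.
Import GRing.Theory.
Local Open Scope ring_scope.

Section Defs.
Variable F : closedFieldType.

Definition ver4 (s t : F) : 'rV[F]_5 := \row_(i < 5) (s ^+ (4 - i) * t ^+ i).

Definition qf (S : 'M[F]_5) (x : 'rV[F]_5) : F := (x *m S *m x^T) 0 0.
Definition bil (S : 'M[F]_5) (x y : 'rV[F]_5) : F := (x *m S *m y^T) 0 0.

(* A point z = (z0:z1:z2) of P^2 = Hilb_2(B) is the binary quadratic form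
   z0 s^2 + z1 s t + z2 t^2 (a degree-2 divisor of P^1 ~ B);
   binary forms of degree d are encoded by their dehomogenisations
   sum_i f_i X^i (coefficient of s^(d-i) t^i). *)
Definition qpoly (z : 'rV[F]_3) : {poly F} := Poly [:: z 0 0; z 0 1; z 0 2].

(* pull-back to P^1 of the hyperplane {x | x *m h = 0} along
   (s:t) |-> ver4 s t *m M : a binary quartic *)
Definition pullback (M : 'M[F]_5) (h : 'cV[F]_5) : {poly F} :=
  Poly [seq (M *m h) i 0 | i <- enum 'I_5].

Definition bdiv (q f : {poly F}) : Prop :=
  exists g : {poly F}, (size g <= 3)%N /\ f = q * g.

(* cone over V_z = linear span of the divisor b_z on B: the intersection of
   all hyperplanes whose pull-back divisor on B contains b_z *)
Definition Vz (M : 'M[F]_5) (z : 'rV[F]_3) (x : 'rV[F]_5) : Prop :=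
  forall h : 'cV[F]_5, bdiv (qpoly z) (pullback M h) -> (x *m h) 0 0 = 0.

Definition secV (M : 'M[F]_5) (x : 'rV[F]_5) : Prop :=
  exists z : 'rV[F]_3, z != 0 /\ Vz M z x.

(* Pluecker vector of the line spanned by u, v, as a skew 5x5 matrix
   (coordinates in wedge^2 F^5 = F^10, i.e. P^9) *)
Definition wedge (u v : 'rV[F]_5) : 'M[F]_5 := u^T *m v - v^T *m u.

Definition grass (P : 'M[F]_5) : Prop :=
  exists u v : 'rV[F]_5, P = wedge u v /\ P != 0.

Definition coneZ_at (M : 'M[F]_5) (z : 'rV[F]_3) (P : 'M[F]_5) : Prop :=
  exists u v : 'rV[F]_5, Vz M z u /\ Vz M z v /\ P = wedge u v /\ P != 0.

Definition conic_eval (c : 'I_6 -> F) (z : 'rV[F]_3) : F :=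
  c (@Ordinal 6 0 isT) * z 0 0 ^+ 2 + c (@Ordinal 6 1 isT) * z 0 1 ^+ 2
  + c (@Ordinal 6 2 isT) * z 0 2 ^+ 2 + c (@Ordinal 6 3 isT) * z 0 0 * z 0 1
  + c (@Ordinal 6 4 isT) * z 0 0 * z 0 2 + c (@Ordinal 6 5 isT) * z 0 1 * z 0 2.

Definition on_conic (c : 'I_6 -> F) (z : 'rV[F]_3) : Prop :=
  z != 0 /\ conic_eval c z = 0.

Definition coneA (M : 'M[F]_5) (c : 'I_6 -> F) (P : 'M[F]_5) : Prop :=
  exists z, on_conic c z /\ coneZ_at M z P.

Definition Rprime (M : 'M[F]_5) (c : 'I_6 -> F) (x : 'rV[F]_5) : Prop :=
  exists z, on_conic c z /\ Vz M z x.

Definition spanA (M : 'M[F]_5) (c : 'I_6 -> F) (P : 'M[F]_5) : Prop :=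
  exists (k : nat) (a : 'I_k -> F) (X : 'I_k -> 'M[F]_5),
    (forall i, coneA M c (X i)) /\ P = \sum_(i < k) a i *: X i.

Definition Tset (M : 'M[F]_5) (c : 'I_6 -> F) (P : 'M[F]_5) : Prop :=
  spanA M c P /\ grass P.

(* the line spanned by u, v is tangent to the quadric {qf S = 0}: there is a
   point p of the line on the quadric such that the line lies in the tangent
   hyperplane at p *)
Definition tangent_line (S : 'M[F]_5) (u v : 'rV[F]_5) : Prop :=
  exists a b : F, let p := a *: u + b *: v in
    p != 0 /\ qf S p = 0 /\ bil S u p = 0 /\ bil S v p = 0.

Definition Wtan (S : 'M[F]_5) (P : 'M[F]_5) : Prop :=
  exists u v : 'rV[F]_5, P = wedge u v /\ P != 0 /\ tangent_line S u v.

Definition quadric_for (M : 'M[F]_5) (c : 'I_6 -> F) (S : 'M[F]_5) : Prop :=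
  S^T = S /\ S != 0 /\
  (forall s t : F, qf S (ver4 s t *m M) = 0) /\
  (forall x : 'rV[F]_5, x != 0 -> ((secV M x /\ qf S x = 0) <-> Rprime M c x)).

End Defs.

From Pilot Require Import Defs.
From HB Require Import structures.
From mathcomp Require Import all_boot all_order all_algebra.
From mathcomp Require Import mpoly.
From mathcomp Require Import ring.
Import GRing.Theory.
Local Open Scope ring_scope.
Set Implicit Arguments. Unset Strict Implicit. Unset Printing Implicit Defensive.

(* Transport everything by M to the standard quartic B = {ver4 s t} and write
   the conic in the chart z2 = 1 as c0 r^2 + c1 t^2 + c2 + c3 r t + c4 r + c5 t.
   The quadrics through B form a six-dimensional family Scm k whose restriction
   to the line V_(r:t:1) is the conic k; as Q contains the lines of A, k is
   proportional to c.  The Pluecker coordinates of V_(r:t:1) are linear in the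
   moments r^i t^j (i + j <= 3), and by interpolating on four lines t = const
   every moment array satisfying the three linear relations induced by the
   conic lies in <A>.  The explicit line e1 /\ w satisfies these relations, so
   it lies in T, while its Gram determinant for Scm c is the polynomial
   gram_wit c, whereas a tangent line has Gram determinant zero.  Phi is the
   product of gram_wit c with c0 and the discriminants used above. *)

Notation i0 := (@Ordinal 5 0 isT).
Notation i1 := (@Ordinal 5 1 isT).
Notation i2 := (@Ordinal 5 2 isT).
Notation i3 := (@Ordinal 5 3 isT).
Notation i4 := (@Ordinal 5 4 isT).
Notation j0 := (@Ordinal 6 0 isT).
Notation j1 := (@Ordinal 6 1 isT).
Notation j2 := (@Ordinal 6 2 isT).
Notation j3 := (@Ordinal 6 3 isT).
Notation j4 := (@Ordinal 6 4 isT).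
Notation j5 := (@Ordinal 6 5 isT).

Lemma ord5_cases (P : 'I_5 -> Prop) :
  P i0 -> P i1 -> P i2 -> P i3 -> P i4 -> forall i, P i.
Proof.
by move=> ? ? ? ? ? [[|[|[|[|[|//]]]]] lt_i5]; rewrite (bool_irrelevance lt_i5 isT).
Qed.

Definition disc (R : comPzRingType) (c : 'I_6 -> R) (t : R) : R :=
  (c j3 * t + c j4) ^+ 2 - 4 * c j0 * (c j1 * t ^+ 2 + c j5 * t + c j2).

Section SecantQuartic.
Variable F : closedFieldType.
Hypothesis F_char0 : [pchar F] =i pred0.
Implicit Types (c k : 'I_6 -> F) (m : nat -> nat -> F) (M S : 'M[F]_5) (u v : 'rV[F]_5).

Definition row5 (a b c d e : F) : 'rV[F]_5 := \row_(i < 5) nth 0 [:: a; b; c; d; e] i.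
Definition row3 (a b c : F) : 'rV[F]_3 := \row_(i < 3) nth 0 [:: a; b; c] i.

Lemma row3_neq0 r t : row3 r t 1 != 0.
Proof.
by apply/negP => /eqP/rowP/(_ (@Ordinal 3 2 isT)); rewrite !mxE /= => /eqP; rewrite oner_eq0.
Qed.

Lemma coef_pullback M h (k : 'I_5) : (pullback M h)`_k = (M *m h) k 0.
Proof. by rewrite /pullback coef_Poly (nth_map k) ?size_enum_ord ?nth_ord_enum. Qed.

(* A hyperplane whose pull-back to B is divisible by z0 + z1 X + z2 X^2 is a
   combination of the three shifts of (z0, z1, z2) in F^5. *)
Lemma Vz1_row5 (z0 z1 z2 x0 x1 x2 x3 x4 : F) :
  z0 * x0 + z1 * x1 + z2 * x2 = 0 ->
  z0 * x1 + z1 * x2 + z2 * x3 = 0 ->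
  z0 * x2 + z1 * x3 + z2 * x4 = 0 ->
  Vz 1 (row3 z0 z1 z2) (row5 x0 x1 x2 x3 x4).
Proof.
move=> e0 e1 e2 h [g [size_g pull_h]].
have hE (k : 'I_5) : h k 0 = (Defs.qpoly (row3 z0 z1 z2) * g)`_k.
  by rewrite -pull_h coef_pullback mul1mx.
have g3 : g`_3 = 0 by rewrite nth_default.
have g4 : g`_4 = 0 by rewrite nth_default // (leq_trans size_g).
rewrite !mxE !big_ord_recl big_ord0 !hE /Defs.qpoly !coefM !big_ord_recl !big_ord0.
rewrite !coef_Poly !mxE /= g3 g4.
transitivity (g`_0 * (z0 * x0 + z1 * x1 + z2 * x2)
  + g`_1 * (z0 * x1 + z1 * x2 + z2 * x3) + g`_2 * (z0 * x2 + z1 * x3 + z2 * x4)).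
  by ring.
by rewrite e0 e1 e2; ring.
Qed.

Lemma Vz_mulmx M z y : Vz 1 z y -> Vz M z (y *m M).
Proof.
move=> Vzy h div_h; rewrite -mulmxA; apply: Vzy.
by rewrite /pullback mul1mx.
Qed.

Lemma wedge_mulmx M u v : wedge (u *m M) (v *m M) = M^T *m wedge u v *m M.
Proof. by rewrite /wedge mulmxBr mulmxBl !trmx_mul !mulmxA. Qed.

Lemma wedgeE u v i j : wedge u v i j = u 0 i * v 0 j - v 0 i * u 0 j.
Proof. by rewrite /wedge !mxE !big_ord1 !mxE. Qed.

Lemma congr_unitmx_neq0 M X : M \in unitmx -> X != 0 -> M^T *m X *m M != 0.
Proof.
move=> M_unit; apply: contra => /eqP XM0.
have := congr1 (fun Y => invmx M^T *m (Y *m invmx M)) XM0.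
by rewrite mul0mx mulmx0 mulmxK // mulKmx ?unitmx_tr // => ->.
Qed.

Lemma coneA_mulmx M c X :
  M \in unitmx -> coneA 1 c X -> coneA M c (M^T *m X *m M).
Proof.
move=> M_unit [z [cz [u [v [Vu [Vv [-> uv_neq0]]]]]]].
exists z; split => //; exists (u *m M), (v *m M).
do 2!(split; first exact: Vz_mulmx).
by rewrite wedge_mulmx; split; last exact: congr_unitmx_neq0.
Qed.

Lemma spanA_add M c P Q : spanA M c P -> spanA M c Q -> spanA M c (P + Q).
Proof.
move=> [k1 [a1 [X1 [AX1 ->]]]] [k2 [a2 [X2 [AX2 ->]]]].
exists (k1 + k2)%N, (fun i => match split i with inl j => a1 j | inr j => a2 j end),
  (fun i => match split i with inl j => X1 j | inr j => X2 j end).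
split; first by move=> i; case: (split i).
rewrite big_split_ord /=; congr (_ + _); apply: eq_bigr => i _.
  by rewrite (unsplitK (inl _ i)).
by rewrite (unsplitK (inr _ i)).
Qed.

Lemma spanA_scale M c a X : coneA M c X -> spanA M c (a *: X).
Proof. by move=> AX; exists 1%N, (fun=> a), (fun=> X); rewrite big_ord1. Qed.

Lemma spanA_mulmx M c P :
  M \in unitmx -> spanA 1 c P -> spanA M c (M^T *m P *m M).
Proof.
move=> M_unit [k [a [X [AX ->]]]].
exists k, a, (fun i => M^T *m X i *m M); split; first by move=> i; apply: coneA_mulmx.
rewrite mulmx_sumr mulmx_suml; apply: eq_bigr => i _.
by rewrite -scalemxAr -scalemxAl.
Qed.

Lemma natF_neq0 n : (n.+1%:R : F) != 0.
Proof. by move/pcharf0P: F_char0 => ->. Qed.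

Lemma sqrt_closed (d : F) : exists s, s ^+ 2 = d.
Proof.
have [x xE] := @solve_monicpoly F 2 (fun i => if i == 0%N then d else 0) isT.
by exists x; rewrite xE !big_ord_recl big_ord0 /= expr0 mulr1 mul0r !addr0.
Qed.

Lemma conic_line_roots c t : c j0 != 0 -> disc c t != 0 ->
  exists r r', [/\ conic_eval c (row3 r t 1) = 0, conic_eval c (row3 r' t 1) = 0
    & r != r'].
Proof.
move=> c0_neq0 disc_neq0; have [s sE] := sqrt_closed (disc c t).
have s_neq0 : s != 0 by apply: contraNneq disc_neq0 => s0; rewrite -sE s0 expr0n.
have n2 : (2 : F) != 0 := natF_neq0 1.
have n4 : (4 : F) != 0 := natF_neq0 3.
pose b := c j3 * t + c j4.
have root_conic e : e ^+ 2 = disc c t ->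
    conic_eval c (row3 ((- b + e) / (2 * c j0)) t 1) = 0.
  move=> eE; transitivity ((e ^+ 2 - disc c t) / (4 * c j0)); last first.
    by rewrite eE subrr mul0r.
  by rewrite /conic_eval !mxE /= /disc /b; field; rewrite n4 c0_neq0.
exists ((- b + s) / (2 * c j0)), ((- b + - s) / (2 * c j0)).
split; [exact: root_conic | by apply: root_conic; rewrite sqrrN |].
rewrite -subr_eq0; have -> : (- b + s) / (2 * c j0) - (- b + - s) / (2 * c j0) = s / c j0.
  by field; rewrite n2 c0_neq0.
by rewrite mulf_neq0 ?invr_eq0.
Qed.

Lemma two_point_weights (r r' b g : F) : r != r' ->
  exists a a', a + a' = b /\ a * r + a' * r' = g.
Proof.
move=> rr'; have d_neq0 : r - r' != 0 by rewrite subr_eq0.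
by exists ((g - b * r') / (r - r')), (b - (g - b * r') / (r - r')); split;
  [ring | field].
Qed.

(* A basis of V_(r:t:1), solving the equations of Vz1_row5. *)
Definition w1 (r t : F) := row5 1 0 (- r) (r * t) (r ^+ 2 - r * t ^+ 2).
Definition w2 (r t : F) := row5 0 1 (- t) (t ^+ 2 - r) (2 * r * t - t ^+ 3).

Lemma w2_neq0 r t : w2 r t != 0.
Proof. by apply/negP => /eqP/rowP/(_ i1); rewrite !mxE /= => /eqP; rewrite oner_eq0. Qed.

Definition skew (p01 p02 p03 p04 p12 p13 p14 p23 p24 p34 : F) : 'M[F]_5 :=
  \matrix_(i < 5, j < 5) nth 0 (nth [::]
    [:: [:: 0; p01; p02; p03; p04];
        [:: - p01; 0; p12; p13; p14];
        [:: - p02; - p12; 0; p23; p24];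
        [:: - p03; - p13; - p23; 0; p34];
        [:: - p04; - p14; - p24; - p34; 0]] i) j.

(* The Pluecker coordinates of V_(r:t:1) are linear in the monomials r^i t^j
   with i + j <= 3; Lam is this linear map, applied to a moment array m. *)
Definition Lam m : 'M[F]_5 :=
  skew (m 0%N 0%N) (- m 0%N 1%N) (m 0%N 2%N - m 1%N 0%N) (2 * m 1%N 1%N - m 0%N 3%N)
    (m 1%N 0%N) (- m 1%N 1%N) (m 1%N 2%N - m 2%N 0%N) (m 2%N 0%N) (- m 2%N 1%N)
    (m 3%N 0%N).

Definition pt_moments (r t : F) : nat -> nat -> F := fun i j => r ^+ i * t ^+ j.

Lemma wedge_w1w2 r t : wedge (w1 r t) (w2 r t) = Lam (pt_moments r t).
Proof.
apply/matrixP; apply: ord5_cases; apply: ord5_cases;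
  by rewrite wedgeE !mxE /pt_moments /=; ring.
Qed.

Lemma LamD m m' : Lam (fun i j => m i j + m' i j) = Lam m + Lam m'.
Proof.
by apply/matrixP; apply: ord5_cases; apply: ord5_cases; rewrite !mxE /=; ring.
Qed.

Lemma LamZ a m : Lam (fun i j => a * m i j) = a *: Lam m.
Proof.
by apply/matrixP; apply: ord5_cases; apply: ord5_cases; rewrite !mxE /=; ring.
Qed.

Definition conic_rel c m (a b : nat) : F :=
  c j0 * m a.+2 b + c j1 * m a b.+2 + c j2 * m a b + c j3 * m a.+1 b.+1
  + c j4 * m a.+1 b + c j5 * m a b.+1.

(* The linear equations of <A>, in terms of moments. *)
Definition conic_moments c m : Prop :=
  [/\ conic_rel c m 0 0 = 0, conic_rel c m 1 0 = 0 & conic_rel c m 0 1 = 0].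

Lemma conic_rel_pt c r t a b : conic_eval c (row3 r t 1) = 0 ->
  conic_rel c (pt_moments r t) a b = 0.
Proof.
move=> crt; transitivity (r ^+ a * t ^+ b * conic_eval c (row3 r t 1)).
  by rewrite /conic_rel /pt_moments /conic_eval !mxE /= !exprS; ring.
by rewrite crt mulr0.
Qed.

Lemma conic_momentsD c m m' : conic_moments c m -> conic_moments c m' ->
  conic_moments c (fun i j => m i j + m' i j).
Proof.
have relD p q : conic_rel c (fun i j => m i j + m' i j) p q
    = conic_rel c m p q + conic_rel c m' p q by rewrite /conic_rel; ring.
move=> [r00 r10 r01] [r00' r10' r01'].
by split; rewrite relD ?r00 ?r10 ?r01 ?r00' ?r10' ?r01' addr0.
Qed.

Lemma conic_momentsZ c a m : conic_moments c m ->
  conic_moments c (fun i j => a * m i j).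
Proof.
have relZ p q : conic_rel c (fun i j => a * m i j) p q = a * conic_rel c m p q.
  by rewrite /conic_rel; ring.
by move=> [r00 r10 r01]; split; rewrite relZ ?r00 ?r10 ?r01 mulr0.
Qed.

Lemma coneA_pt c r t : conic_eval c (row3 r t 1) = 0 ->
  coneA 1 c (Lam (pt_moments r t)).
Proof.
move=> crt; exists (row3 r t 1); split; first by split; first exact: row3_neq0.
exists (w1 r t), (w2 r t); split; first by apply: Vz1_row5; ring.
split; first by apply: Vz1_row5; ring.
rewrite wedge_w1w2; split => //.
apply/negP => /eqP/matrixP/(_ i0 i1).
by rewrite !mxE /pt_moments /= mulr1 => /eqP; rewrite oner_eq0.
Qed.

(* The moments m(i,j) with i >= 2 are determined by the others through the
   conic relations, since c0 != 0. *)
Lemma Lam_eq_low_moments c m m' : c j0 != 0 ->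
  conic_moments c m -> conic_moments c m' ->
  (forall j, (j <= 3)%N -> m 0%N j = m' 0%N j) ->
  (forall j, (j <= 2)%N -> m 1%N j = m' 1%N j) ->
  Lam m = Lam m'.
Proof.
move=> c0_neq0 [r00 r10 r01] [r00' r10' r01'] eq0 eq1.
have c0_cancel x x' e : e = 0 -> c j0 * (x - x') = e -> x = x'.
  by move=> -> /eqP; rewrite mulf_eq0 (negbTE c0_neq0) subr_eq0 => /eqP.
have e20 : m 2%N 0%N = m' 2%N 0%N.
  apply: (c0_cancel _ _ (conic_rel c m 0 0 - conic_rel c m' 0 0)).
    by rewrite r00 r00' subrr.
  by rewrite /conic_rel !eq0 ?eq1 //; ring.
have e21 : m 2%N 1%N = m' 2%N 1%N.
  apply: (c0_cancel _ _ (conic_rel c m 0 1 - conic_rel c m' 0 1)).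
    by rewrite r01 r01' subrr.
  by rewrite /conic_rel !eq0 ?eq1 //; ring.
have e30 : m 3%N 0%N = m' 3%N 0%N.
  apply: (c0_cancel _ _ (conic_rel c m 1 0 - conic_rel c m' 1 0)).
    by rewrite r10 r10' subrr.
  by rewrite /conic_rel !eq1 // e20 e21; ring.
by rewrite /Lam !eq0 // !eq1 // e20 e21 e30.
Qed.

Lemma line_moments_spanA c t b g : c j0 != 0 -> disc c t != 0 ->
  exists m, [/\ spanA 1 c (Lam m), conic_moments c m,
    forall j, m 0%N j = b * t ^+ j & forall j, m 1%N j = g * t ^+ j].
Proof.
move=> c0_neq0 disc_neq0.
have [r [r' [cr cr' rr']]] := conic_line_roots c0_neq0 disc_neq0.
have [a [a' [ab ag]]] := two_point_weights b g rr'.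
exists (fun i j => a * pt_moments r t i j + a' * pt_moments r' t i j); split.
- by rewrite LamD !LamZ; apply: spanA_add; apply: spanA_scale; apply: coneA_pt.
- by apply: conic_momentsD; apply: conic_momentsZ; split; apply: conic_rel_pt.
- by move=> j; rewrite /pt_moments -ab; ring.
- by move=> j; rewrite /pt_moments -ag; ring.
Qed.

(* Interpolate the moments m(0, j) (j <= 3) and m(1, j) (j <= 2) by weighted
   pairs of points of the conic on the four lines t = 0, 1, -1, 2; the weights
   b and g solve the Vandermonde systems at these nodes. *)
Lemma Lam_spanA c m : c j0 != 0 ->
  disc c 0 != 0 -> disc c 1 != 0 -> disc c (-1) != 0 -> disc c 2 != 0 ->
  conic_moments c m -> spanA 1 c (Lam m).
Proof.
move=> c0_neq0 d0 d1 dm d2 cm.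
pose b2 := (m 0%N 3%N - m 0%N 1%N) / 6.
pose b1 := (m 0%N 2%N - 4 * b2 + (m 0%N 1%N - 2 * b2)) / 2.
pose bm := (m 0%N 2%N - 4 * b2 - (m 0%N 1%N - 2 * b2)) / 2.
pose b0 := m 0%N 0%N - (m 0%N 2%N - 4 * b2) - b2.
pose g1 := (m 1%N 2%N + m 1%N 1%N) / 2.
pose gm := (m 1%N 2%N - m 1%N 1%N) / 2.
pose g0 := m 1%N 0%N - m 1%N 2%N.
have [m0 [A0 C0 L0 K0]] := line_moments_spanA b0 g0 c0_neq0 d0.
have [m1 [A1 C1 L1 K1]] := line_moments_spanA b1 g1 c0_neq0 d1.
have [mm [Am Cm Lm Km]] := line_moments_spanA bm gm c0_neq0 dm.
have [m2 [A2 C2 L2 K2]] := line_moments_spanA b2 0 c0_neq0 d2.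
have n2 : (2 : F) != 0 := natF_neq0 1.
have n6 : (6 : F) != 0 := natF_neq0 5.
rewrite (@Lam_eq_low_moments c m (fun i j => m0 i j + (m1 i j + (mm i j + m2 i j)))) //.
- by rewrite !LamD; do 3!apply: spanA_add => //.
- by do 3!apply: conic_momentsD => //.
- rewrite /b0 /b1 /bm /b2 in L0 L1 Lm L2.
  by move=> [|[|[|[|j]]]] // _; rewrite L0 L1 Lm L2; field; rewrite ?n2 ?n6.
- rewrite /g0 /g1 /gm in K0 K1 Km.
  by move=> [|[|[|j]]] // _; rewrite K0 K1 Km K2; field; rewrite ?n2.
Qed.

Lemma sum5 (f : 'I_5 -> F) : \sum_(i < 5) f i = f i0 + f i1 + f i2 + f i3 + f i4.
Proof.
rewrite !big_ord_recl big_ord0 addr0 !addrA.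
by repeat congr (_ + _); congr f; apply/val_inj.
Qed.

Lemma natF_inj : injective (fun n : nat => (n%:R : F)).
Proof.
move=> m n /= mn; wlog le_mn : m n mn / (m <= n)%N.
  by move=> W; case: (leqP m n) => [|/ltnW] h; [|symmetry]; apply: W.
have : ((n - m)%N%:R : F) == 0 by rewrite natrB // mn subrr.
by move/pcharf0P: F_char0 => ->; rewrite subn_eq0 => nm; apply/eqP; rewrite eqn_leq le_mn.
Qed.

Lemma poly_eq0_of_roots (p : {poly F}) : (forall x, p.[x] = 0) -> p = 0.
Proof.
move=> p_roots; apply/eqP; apply: contraT => p_neq0.
have := max_poly_roots p_neq0 (rs := [seq n%:R | n <- iota 0 (size p)]).
rewrite size_map size_iota ltnn (map_inj_uniq natF_inj) iota_uniq; apply => //.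
by apply/allP => x _; rewrite /root p_roots.
Qed.

(* The quadric through B containing exactly the lines V_(r:t:1) with (r:t:1)
   on the conic k, see qf_Scm_w2. *)
Definition Scm k : 'M[F]_5 :=
  \matrix_(i < 5, j < 5) nth 0 (nth [::]
    [:: [:: 0; 0; k j2; - k j5; k j1];
        [:: 0; -2 * k j2; k j5; k j4; - k j3];
        [:: k j2; k j5; -2 * k j1 - 2 * k j4; k j3; k j0];
        [:: - k j5; k j4; k j3; -2 * k j0; 0];
        [:: k j1; - k j3; k j0; 0; 0]] i) j.

Definition quadric_conic S : 'I_6 -> F :=
  fun i => nth 0 [:: S i2 i4; S i0 i4; S i0 i2; - S i1 i4; S i1 i3; - S i0 i3] i.

(* qf S (ver4 s 1) is a binary octic whose nine coefficients are the
   anti-diagonal sums of S; they vanish, leaving six free entries. *)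
Lemma quadric_through_B S : S^T = S -> (forall s, qf S (ver4 s 1) = 0) ->
  S = Scm (quadric_conic S).
Proof.
move=> S_sym S_B.
have sym i j : S i j = S j i by rewrite -{1}S_sym mxE.
pose E := fun n : nat => nth 0
  [:: S i4 i4; S i3 i4 + S i4 i3; S i2 i4 + S i3 i3 + S i4 i2;
      S i1 i4 + S i2 i3 + S i3 i2 + S i4 i1;
      S i0 i4 + S i1 i3 + S i2 i2 + S i3 i1 + S i4 i0;
      S i0 i3 + S i1 i2 + S i2 i1 + S i3 i0;
      S i0 i2 + S i1 i1 + S i2 i0; S i0 i1 + S i1 i0; S i0 i0] n.
have E0 n : (n < 9)%N -> E n = 0.
  have /poly_eq0_of_roots/polyP/(_ n) : forall s, (\poly_(i < 9) E i).[s] = 0.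
    move=> s; rewrite -(S_B s) horner_poly /qf /E /ver4 !big_ord_recl big_ord0.
    by rewrite !mxE !sum5 !mxE !sum5 !mxE /=; ring.
  by rewrite coef_poly coef0 => + lt_n9; rewrite lt_n9.
have n2 : (2 : F) != 0 := natF_neq0 1.
have half (x : F) : 2 * x = 0 -> x = 0.
  by move/eqP; rewrite mulf_eq0 (negbTE n2) => /eqP.
have solve (x y e : F) : e = 0 -> x - y = e -> x = y by move=> -> /subr0_eq.
have := E0 0%N; have := E0 1%N; have := E0 2%N; have := E0 3%N; have := E0 4%N.
have := E0 5%N; have := E0 6%N; have := E0 7%N; have := E0 8%N.
rewrite /E /= (sym i4 i3) (sym i4 i2) (sym i4 i1) (sym i3 i2) (sym i4 i0) (sym i3 i1).
rewrite (sym i3 i0) (sym i2 i1) (sym i2 i0) (sym i1 i0).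
move=> /(_ isT) h8 /(_ isT) h7 /(_ isT) h6 /(_ isT) h5 /(_ isT) h4.
move=> /(_ isT) h3 /(_ isT) h2 /(_ isT) h1 /(_ isT) s44.
have s01 : S i0 i1 = 0 by apply: half; rewrite -h7; ring.
have s11 : S i1 i1 = - 2 * S i0 i2 by apply: (solve _ _ _ h6); ring.
have s12 : S i1 i2 = - S i0 i3.
  by apply/eqP; rewrite -addr_eq0; apply/eqP/half; rewrite -h5; ring.
have s22 : S i2 i2 = - 2 * S i0 i4 - 2 * S i1 i3 by apply: (solve _ _ _ h4); ring.
have s23 : S i2 i3 = - S i1 i4.
  by apply/eqP; rewrite -addr_eq0; apply/eqP/half; rewrite -h3; ring.
have s33 : S i3 i3 = - 2 * S i2 i4 by apply: (solve _ _ _ h2); ring.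
have s34 : S i3 i4 = 0 by apply: half; rewrite -h1; ring.
apply/matrixP; apply: ord5_cases; apply: ord5_cases; rewrite !mxE /quadric_conic /=;
  rewrite ?(sym i1 i0) ?(sym i2 i0) ?(sym i2 i1) ?(sym i3 i0) ?(sym i3 i1);
  rewrite ?(sym i3 i2) ?(sym i4 i0) ?(sym i4 i1) ?(sym i4 i2) ?(sym i4 i3);
  by rewrite ?h8 ?s01 ?s11 ?s12 ?s22 ?s23 ?s33 ?s34 ?s44; ring.
Qed.

Lemma qf_Scm_w2 k r t : qf (Scm k) (w2 r t) = -2 * conic_eval k (row3 r t 1).
Proof. by rewrite /qf /w2 /row5 /conic_eval !mxE !sum5 !mxE !sum5 !mxE /=; ring. Qed.

Lemma Scm_scale k c a : (forall i, k i = a * c i) -> Scm k = a *: Scm c.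
Proof.
by move=> kE; apply/matrixP; apply: ord5_cases; apply: ord5_cases;
  rewrite !mxE /= ?kE; ring.
Qed.

(* On the line t, the conic k - a c has no r^2 term and vanishes at the two
   distinct points of the conic c on that line. *)
Lemma conic_line_proportional c k t : c j0 != 0 -> disc c t != 0 ->
  (forall r, conic_eval c (row3 r t 1) = 0 -> conic_eval k (row3 r t 1) = 0) ->
  let a := k j0 / c j0 in
  (k j3 - a * c j3) * t + (k j4 - a * c j4) = 0 /\
  (k j1 - a * c j1) * t ^+ 2 + (k j5 - a * c j5) * t + (k j2 - a * c j2) = 0.
Proof.
move=> c0_neq0 disc_neq0 ck a.
have [r [r' [cr cr' rr']]] := conic_line_roots c0_neq0 disc_neq0.
set d := _ * t + _; set e := _ + _ * t + _.
have de x : conic_eval c (row3 x t 1) = 0 -> d * x + e = 0.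
  move=> cx; transitivity (conic_eval k (row3 x t 1) - a * conic_eval c (row3 x t 1)).
    by rewrite /conic_eval !mxE /= /d /e /a; field; rewrite ?c0_neq0.
  by rewrite cx (ck x cx) mulr0 subrr.
have d0 : d = 0.
  have : d * (r - r') = 0.
    transitivity ((d * r + e) - (d * r' + e)); first by ring.
    by rewrite !de // subrr.
  by move/eqP; rewrite mulf_eq0 subr_eq0 (negbTE rr') orbF => /eqP.
by split; rewrite // -(de r cr) d0 mul0r add0r.
Qed.

Lemma conic_proportional c k : c j0 != 0 ->
  disc c 0 != 0 -> disc c 1 != 0 -> disc c (-1) != 0 ->
  (forall r t, conic_eval c (row3 r t 1) = 0 -> conic_eval k (row3 r t 1) = 0) ->
  forall i, k i = k j0 / c j0 * c i.
Proof.
move=> c0_neq0 d0 d1 dm ck; set a := k j0 / c j0.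
have [l0 q0] := conic_line_proportional c0_neq0 d0 (ck^~ 0).
have [l1 q1] := conic_line_proportional c0_neq0 d1 (ck^~ 1).
have [_ qm] := conic_line_proportional c0_neq0 dm (ck^~ (-1)).
have n2 : (2 : F) != 0 := natF_neq0 1.
have e4 : k j4 = a * c j4 by apply/subr0_eq; rewrite -l0 /a; ring.
have e2 : k j2 = a * c j2 by apply/subr0_eq; rewrite -q0 /a; ring.
have e3 : k j3 = a * c j3 by apply/subr0_eq; rewrite -l1 e4 /a; ring.
have e1 : k j1 = a * c j1.
  apply/subr0_eq/(mulfI n2); rewrite mulr0 -(addr0 0) -{1}q1 -qm e2 /a; ring.
have e5 : k j5 = a * c j5 by apply/subr0_eq; rewrite -q1 e1 e2 /a; ring.
move=> [[|[|[|[|[|[|//]]]]]] lt_i6]; rewrite (bool_irrelevance lt_i6 isT) //.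
by rewrite /a divfK.
Qed.

Lemma qf_mulmx S M x : qf S (x *m M) = qf (M *m S *m M^T) x.
Proof. by rewrite /qf trmx_mul !mulmxA. Qed.

Lemma bil_mulmx S M x y : bil S (x *m M) (y *m M) = bil (M *m S *m M^T) x y.
Proof. by rewrite /bil trmx_mul !mulmxA. Qed.

Lemma mulmx_unit_neq0 M (x : 'rV[F]_5) : M \in unitmx -> x != 0 -> x *m M != 0.
Proof.
move=> M_unit; apply: contra => /eqP xM0.
by have := congr1 (mulmx^~ (invmx M)) xM0; rewrite mulmxK // mul0mx => ->.
Qed.

Lemma quadric_for_Scm M c S : M \in unitmx -> quadric_for M c S ->
  c j0 != 0 -> disc c 0 != 0 -> disc c 1 != 0 -> disc c (-1) != 0 ->
  exists2 a, a != 0 & M *m S *m M^T = a *: Scm c.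
Proof.
move=> M_unit [S_sym [S_neq0 [S_B S_R']]] c0_neq0 d0 d1 dm.
set S' := M *m S *m M^T.
have S'_sym : S'^T = S' by rewrite /S' !trmx_mul trmxK S_sym mulmxA.
have S'_B s : qf S' (ver4 s 1) = 0 by rewrite -qf_mulmx S_B.
have S'_conic r t : conic_eval c (row3 r t 1) = 0 ->
    conic_eval (quadric_conic S') (row3 r t 1) = 0.
  move=> crt; have : -2 * conic_eval (quadric_conic S') (row3 r t 1) = 0.
    rewrite -qf_Scm_w2 -quadric_through_B // -qf_mulmx.
    have [_ R'_Q] := S_R' _ (mulmx_unit_neq0 M_unit (w2_neq0 r t)).
    apply: (proj2 (R'_Q _)).
    exists (row3 r t 1); split; first by split; first exact: row3_neq0.
    by apply: Vz_mulmx; apply: Vz1_row5; ring.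
  by move/eqP; rewrite mulf_eq0 oppr_eq0 (negbTE (natF_neq0 1)) => /eqP.
have S'E : S' = quadric_conic S' j0 / c j0 *: Scm c.
  by rewrite [LHS]quadric_through_B //; apply/Scm_scale/conic_proportional.
set a := quadric_conic S' j0 / c j0 in S'E; exists a => //.
have MT_unit : M^T \in unitmx by rewrite unitmx_tr.
have := congr_unitmx_neq0 MT_unit S_neq0.
by rewrite trmxK -/S' S'E; apply: contraNneq => ->; rewrite scale0r.
Qed.

Definition gram S u v := bil S u u * bil S v v - bil S u v * bil S v u.

Lemma bilDl S a b x y z : bil S (a *: x + b *: y) z = a * bil S x z + b * bil S y z.
Proof. by rewrite /bil !mulmxDl -!scalemxAl !mxE. Qed.

Lemma bilDr S a b x y z : bil S z (a *: x + b *: y) = a * bil S z x + b * bil S z y.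
Proof. by rewrite /bil linearD !linearZ /= mulmxDr -!scalemxAr !mxE. Qed.

Lemma gramZ a S u v : gram (a *: S) u v = a ^+ 2 * gram S u v.
Proof. by rewrite /gram /bil -!scalemxAr -!scalemxAl !mxE; ring. Qed.

Lemma gram_mulmx S (M : 'M[F]_5) u v :
  gram S (u *m M) (v *m M) = gram (M *m S *m M^T) u v.
Proof. by rewrite /gram !bil_mulmx. Qed.

Lemma wedge_span x y u v : wedge x y = wedge u v -> wedge u v != 0 ->
  exists a b, u = a *: x + b *: y.
Proof.
move=> xy_uv uv_neq0.
have [[i j] /= uv_ij|uv0] := pickP (fun p : 'I_5 * 'I_5 => wedge u v p.1 p.2 != 0);
  last first.
  case/negP: uv_neq0; apply/eqP/matrixP => i j.
  by have := uv0 (i, j); rewrite /= => /negbFE/eqP ->; rewrite mxE.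
have E (k l : 'I_5) : x 0 k * y 0 l - y 0 k * x 0 l = u 0 k * v 0 l - v 0 k * u 0 l.
  by rewrite -!wedgeE xy_uv.
rewrite wedgeE in uv_ij; set d := _ - _ in uv_ij.
exists ((u 0 i * y 0 j - u 0 j * y 0 i) / d), ((u 0 j * x 0 i - u 0 i * x 0 j) / d).
apply/rowP => k; rewrite !mxE.
(* Expand the 3x3 determinant with rows u, x, y and columns i, j, k. *)
have key : (u 0 i * y 0 j - u 0 j * y 0 i) * x 0 k + (u 0 j * x 0 i - u 0 i * x 0 j) * y 0 k
    = u 0 k * d.
  transitivity (u 0 j * (x 0 i * y 0 k - y 0 i * x 0 k)
    - u 0 i * (x 0 j * y 0 k - y 0 j * x 0 k)); first by ring.
  by rewrite !E /d; ring.
by apply: (mulIf uv_ij); rewrite -key; field.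
Qed.

Lemma wedge_oppr_swap u v : wedge v (- u) = wedge u v.
Proof. by apply/matrixP => i j; rewrite !wedgeE !mxE; ring. Qed.

Lemma gram_eq0_of_kernel S u v a b :
  let p := a *: u + b *: v in
  p != 0 -> bil S u p = 0 -> bil S v p = 0 -> gram S u v = 0.
Proof.
move=> p p_neq0; rewrite /p !bilDr => Bu Bv.
apply/eqP/negPn/negP => g_neq0; case/negP: p_neq0; rewrite /p.
have [-> ->] : a = 0 /\ b = 0.
  split; apply: (mulIf g_neq0); rewrite mul0r.
    transitivity ((a * bil S u u + b * bil S u v) * bil S v v
      - (a * bil S v u + b * bil S v v) * bil S u v); first by rewrite /gram; ring.
    by rewrite Bu Bv; ring.
  transitivity ((a * bil S v u + b * bil S v v) * bil S u u
    - (a * bil S u u + b * bil S u v) * bil S v u); first by rewrite /gram; ring.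
  by rewrite Bu Bv; ring.
by rewrite !scale0r addr0.
Qed.

Lemma tangent_gram S u v u' v' :
  wedge u' v' = wedge u v -> wedge u v != 0 -> tangent_line S u' v' ->
  gram S u v = 0.
Proof.
move=> uv_u'v' uv_neq0 [a [b [p_neq0 [_ [Bu' Bv']]]]].
have u'v'_neq0 : wedge u' v' != 0 by rewrite uv_u'v'.
have [al [be uE]] := wedge_span uv_u'v' uv_neq0.
have [ga [de vE]] : exists g d, v = g *: u' + d *: v'.
  by apply: (wedge_span (v := - u)); rewrite wedge_oppr_swap.
have [al' [be' u'E]] := wedge_span (esym uv_u'v') u'v'_neq0.
have [ga' [de' v'E]] : exists g d, v' = g *: u + d *: v.
  by apply: (wedge_span (v := - u')); rewrite wedge_oppr_swap.
set p := a *: u' + b *: v' in p_neq0 Bu' Bv'.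
have pE : p = (a * al' + b * ga') *: u + (a * be' + b * de') *: v.
  by rewrite /p u'E v'E !scalerDr !scalerA addrACA -!scalerDl.
apply: (gram_eq0_of_kernel (a := a * al' + b * ga') (b := a * be' + b * de'));
  rewrite -pE //.
  by rewrite uE bilDl Bu' Bv' !mulr0 addr0.
by rewrite vE bilDl Bu' Bv' !mulr0 addr0.
Qed.

End SecantQuartic.

Section WitnessPolynomials.
Variable R : comPzRingType.
Implicit Types c : 'I_6 -> R.

(* Coordinates 0, 2, 3, 4 of a vector w such that the Pluecker coordinates of
   e1 /\ w satisfy the three conic relations (coordinate 1 is 0). *)
Definition wit0 c := -2 * c j1 * c j3 * c j5 + c j1 * c j4 ^+ 2 + 3 * c j1 ^+ 2 * c j4
  + 2 * c j1 ^+ 3 + c j2 * c j3 ^+ 2 - c j3 * c j4 * c j5.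
Definition wit2 c := c j1 * c j2 * c j4 + 2 * c j1 ^+ 2 * c j2 - c j2 * c j3 * c j5.
Definition wit3 c := c j1 * c j2 * c j5 - c j2 ^+ 2 * c j3.
Definition wit4 c := -2 * c j1 * c j2 ^+ 2 + c j2 * c j5 ^+ 2 - c j2 ^+ 2 * c j4.

(* The entries of the Gram matrix of the quadric Scm c on (e1, w). *)
Definition gram_e1_wit c := c j5 * wit2 c + c j4 * wit3 c - c j3 * wit4 c.
Definition gram_wit_wit c :=
  2 * (c j2 * wit0 c * wit2 c - c j5 * wit0 c * wit3 c + c j1 * wit0 c * wit4 c
       + c j3 * wit2 c * wit3 c + c j0 * wit2 c * wit4 c)
  + (-2 * c j1 - 2 * c j4) * wit2 c ^+ 2 - 2 * c j0 * wit3 c ^+ 2.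
Definition gram_wit c := -2 * c j2 * gram_wit_wit c - gram_e1_wit c ^+ 2.

(* The polynomial Phi: c0 and the discriminants keep two distinct points of
   the conic on each line t = 0, 1, -1, 2, and gram_wit keeps the witness line
   e1 /\ w from being tangent to the quadric. *)
Definition genericity c :=
  c j0 * disc c 0 * disc c 1 * disc c (-1) * disc c 2 * gram_wit c.

Lemma genericity_ext c c' : c =1 c' -> genericity c = genericity c'.
Proof.
move=> cc'.
by rewrite /genericity /gram_wit /gram_wit_wit /gram_e1_wit /wit0 /wit2 /wit3 /wit4 /disc !cc'.
Qed.

End WitnessPolynomials.

Section WitnessMorphism.
Variables (R S : comPzRingType) (f : {rmorphism R -> S}) (c : 'I_6 -> R).

Let fE := (rmorphB, rmorphD, rmorphM, rmorphXn, rmorphN, rmorph_nat, rmorph0, rmorph1).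

Lemma rmorph_disc t : f (disc c t) = disc (f \o c) (f t).
Proof. by rewrite /disc !fE. Qed.

Lemma rmorph_gram_wit : f (gram_wit c) = gram_wit (f \o c).
Proof.
have wE : [/\ f (wit0 c) = wit0 (f \o c), f (wit2 c) = wit2 (f \o c),
    f (wit3 c) = wit3 (f \o c) & f (wit4 c) = wit4 (f \o c)].
  by split; rewrite /wit0 /wit2 /wit3 /wit4 !fE.
have [w0 w2 w3 w4] := wE.
rewrite /gram_wit /gram_wit_wit /gram_e1_wit.
rewrite [wit0 c]lock [wit2 c]lock [wit3 c]lock [wit4 c]lock !fE -!lock.
by rewrite w0 w2 w3 w4.
Qed.

Lemma rmorph_genericity : f (genericity c) = genericity (f \o c).
Proof.
rewrite /genericity !rmorphM !rmorph_disc rmorph_gram_wit.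
by rewrite rmorphN !rmorph1 rmorph0 rmorph_nat.
Qed.

End WitnessMorphism.

Section Witness.
Variable F : closedFieldType.
Hypothesis F_char0 : [pchar F] =i pred0.
Implicit Types (c : 'I_6 -> F) (M : 'M[F]_5).

Definition e1 : 'rV[F]_5 := row5 0 1 0 0 0.
Definition witness c : 'rV[F]_5 := row5 (wit0 c) 0 (wit2 c) (wit3 c) (wit4 c).

Definition witness_moments c : nat -> nat -> F := fun i j => nth 0 (nth [::]
  [:: [:: - wit0 c; 0; wit2 c; -2 * wit3 c]; [:: wit2 c; - wit3 c; wit4 c]] i) j.

Lemma wedge_e1_witness c : wedge e1 (witness c) = Lam (witness_moments c).
Proof.
by apply/matrixP; apply: ord5_cases; apply: ord5_cases;
  rewrite wedgeE /e1 /witness /row5 !mxE /witness_moments /=; ring.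
Qed.

Lemma conic_moments_witness c : conic_moments c (witness_moments c).
Proof. by split; rewrite /conic_rel /witness_moments /= /wit0 /wit2 /wit3 /wit4; ring. Qed.

Lemma gram_Scm_witness c : gram (Scm c) e1 (witness c) = gram_wit c.
Proof.
rewrite /gram /bil /gram_wit /gram_wit_wit /gram_e1_wit /e1 /witness /row5.
by rewrite !mxE !sum5 !mxE !sum5 !mxE /=; ring.
Qed.

Lemma wedge_e1_witness_neq0 c : gram_wit c != 0 -> wedge e1 (witness c) != 0.
Proof.
apply: contra => /eqP e1w0.
have w0 (j : 'I_5) : wedge e1 (witness c) i1 j = 0 by rewrite e1w0 mxE.
have := w0 i0; have := w0 i2; have := w0 i3; have := w0 i4.
rewrite !wedgeE /e1 /witness /row5 !mxE /= !mul1r !mul0r !subr0 => w4 w3 w2 w0'.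
by rewrite /gram_wit /gram_wit_wit /gram_e1_wit w0' w2 w3 w4; apply/eqP; ring.
Qed.

Lemma genericityP c : genericity c != 0 ->
  [/\ c j0 != 0, disc c 0 != 0, disc c 1 != 0, disc c (-1) != 0 & disc c 2 != 0]
  /\ gram_wit c != 0.
Proof.
by rewrite /genericity !mulf_eq0 !negb_or => /andP[/andP[/andP[/andP[/andP[]]]]].
Qed.

Lemma meval_genericity_X (c : 'I_6 -> F) :
  (genericity (fun i => 'X_i : {mpoly F[6]})).@[c] = genericity c.
Proof. by rewrite rmorph_genericity; apply: genericity_ext => i /=; rewrite mevalXU. Qed.

Lemma genericity_X_neq0 : genericity (fun i => 'X_i : {mpoly F[6]}) != 0.
Proof.
pose c : 'I_6 -> F := fun i => if (i < 3)%N then -1 else 0.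
have c_val : genericity c = - (2 ^+ 15 * 5).
  rewrite /genericity /gram_wit /gram_wit_wit /gram_e1_wit /disc.
  by rewrite /wit0 /wit2 /wit3 /wit4 /c /=; ring.
apply: contraNneq (_ : genericity c != 0) => [X0|].
  by rewrite -meval_genericity_X X0 meval0.
by rewrite c_val oppr_eq0 mulf_neq0 ?expf_neq0 ?(natF_neq0 F_char0 1) ?(natF_neq0 F_char0 4).
Qed.

Lemma witness_line_neq0 M c : M \in unitmx -> gram_wit c != 0 ->
  wedge (e1 *m M) (witness c *m M) != 0.
Proof.
move=> M_unit G; rewrite wedge_mulmx.
exact: congr_unitmx_neq0 M_unit (wedge_e1_witness_neq0 G).
Qed.

Lemma Tset_witness M c : M \in unitmx -> genericity c != 0 ->
  Tset M c (wedge (e1 *m M) (witness c *m M)).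
Proof.
move=> M_unit /genericityP[[c0 d0 d1 dm d2] G]; split.
  rewrite wedge_mulmx; apply: spanA_mulmx => //; rewrite wedge_e1_witness.
  exact (Lam_spanA F_char0 c0 d0 d1 dm d2 (conic_moments_witness c)).
by exists (e1 *m M), (witness c *m M); split => //; apply: witness_line_neq0.
Qed.

End Witness.

Theorem lemma6p1 (F : closedFieldType) (HF : [pchar F] =i pred0)
    (M : 'M[F]_5) (HM : M \in unitmx) :
  exists Phi : {mpoly F[6]}, Phi != 0 /\
    forall c : 'I_6 -> F, Phi.@[c] != 0 ->
      forall S : 'M[F]_5, quadric_for M c S ->
        ~ (forall P : 'M[F]_5, Tset M c P -> Wtan S P).
Proof.
exists (genericity (fun i => 'X_i)); split; first exact: genericity_X_neq0.
move=> c; rewrite meval_genericity_X => gen_c S QS W_T.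
have [[c0 d0 d1 dm _] gram_neq0] := genericityP gen_c.
have [a a_neq0 SE] := quadric_for_Scm HF HM QS c0 d0 d1 dm.
have [u [v [uvE [_ tan_uv]]]] := W_T _ (Tset_witness HF HM gen_c).
have /eqP := tangent_gram (esym uvE) (witness_line_neq0 HM gram_neq0) tan_uv.
rewrite gram_mulmx SE gramZ gram_Scm_witness mulf_eq0 expf_eq0 /=.
by rewrite (negbTE a_neq0) (negbTE gram_neq0).
Qed.
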